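(* Let $n\ge 3$, let $\mathbf{x}$ be a vertex of $P^n_{\mathrm{SEP}}$ and let $ab$ be an edge with $x_{ab}=1$. Then $\mathrm{Gap}^+(\mathrm{bb}(\mathbf{x},ab))\ge\mathrm{Gap}^+(\mathbf{x})$.
   Context: $K_n=(V_n,E_n)$ is the complete undirected graph on $n$ nodes; $\delta(S)$ is the set of edges with exactly one endpoint in $S$. $P^n_{\mathrm{SEP}}=\{\mathbf{x}\in\mathbb{R}^{E_n} : \sum_{e\in\delta(v)}x_e=2\ \forall v;\ \sum_{e\in\delta(S)}x_e\ge 2\ \forall S \text{ with } 3\le|S|\le n-3;\ 0\le x_e\le 1\}$; a vertex is an extreme point. A cost $\mathbf{c}\in\mathbb{R}^{E_n}_{\ge0}$ is metric if $c_{ik}+c_{kj}\ge c_{ij}$ for all distinct $i,j,k$; $\mathrm{TSP}(\mathbf{c})$ is the minimum cost of a Hamiltonian cycle. $\mathrm{Gap}^+(\mathbf{x})=\sup\{\mathrm{TSP}(\mathbf{c})/(\mathbf{c}\cdot\mathbf{x}) : \mathbf{c}\text{ metric on } K_n\}$. bb-move: for $\mathbf{x}\in P^n_{\mathrm{SEP}}$ and an edge $ab$ with $x_{ab}=1$, $\mathrm{bb}(\mathbf{x},ab)=\mathbf{x}'\in\mathbb{R}^{E_{n+1}}$, where $V_{n+1}=V_n\cup\{w\}$, defined by $x'_{ab}=0$, $x'_{aw}=x'_{wb}=1$, $x'_e=0$ for $e\in\delta(w)\setminus\{aw,wb\}$, and $x'_e=x_e$ for all other edges (it is known that $\mathrm{bb}(\mathbf{x},ab)$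 is a vertex of $P^{n+1}_{\mathrm{SEP}}$ iff $\mathbf{x}$ is a vertex of $P^n_{\mathrm{SEP}}$). *)

From HB Require Import structures.
From mathcomp Require Import all_boot all_order all_algebra all_fingroup.
From mathcomp Require Import all_classical all_reals ereal.
Set Implicit Arguments. Unset Strict Implicit. Unset Printing Implicit Defensive.
Import Order.TTheory GRing.Theory Num.Theory.
Local Open Scope ring_scope.

(* K_n: nodes 'I_n; an edge is a 2-element subset of 'I_n.
   A vector of R^{E_n} is represented by a function {set 'I_n} -> R of which
   only the values on edges (2-subsets) are ever used. *)
Definition edges (n : nat) : {set {set 'I_n}} := [set e : {set 'I_n} | #|e| == 2%N].

Section Defs.
Variable R : realType.

Definition cut_sum n (x : {set 'I_n} -> R) (S : {set 'I_n}) : R :=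
  \sum_(e in edges n | #|e :&: S| == 1%N) x e.

Definition in_SEP n (x : {set 'I_n} -> R) : Prop :=
  [/\ (forall v : 'I_n, cut_sum x [set v] = 2),
      (forall S : {set 'I_n}, (3 <= #|S|)%N -> (#|S| <= n - 3)%N -> 2 <= cut_sum x S)
    & (forall e, e \in edges n -> 0 <= x e <= 1)].

(* extreme point of P^n_SEP (equality of vectors = equality on all edges) *)
Definition is_vertex_SEP n (x : {set 'I_n} -> R) : Prop :=
  in_SEP x /\
  forall (y z : {set 'I_n} -> R) (t : R), in_SEP y -> in_SEP z -> 0 < t < 1 ->
    (forall e, e \in edges n -> x e = t * y e + (1 - t) * z e) ->
    forall e, e \in edges n -> y e = z e.

Definition metric n (c : {set 'I_n} -> R) : Prop :=
  (forall e, e \in edges n -> 0 <= c e) /\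
  forall i j k : 'I_n, i != j -> j != k -> i != k ->
    c [set i; j] <= c [set i; k] + c [set k; j].

Definition dot n (c x : {set 'I_n} -> R) : R := \sum_(e in edges n) c e * x e.

Definition tour_cost n (c : {set 'I_n} -> R) (s : {perm 'I_n}) : R :=
  \sum_(k : 'I_n) c [set s k; s (ordS k)].

Definition TSP n (c : {set 'I_n} -> R) : R :=
  \big[Num.min/tour_cost c 1]_(s : {perm 'I_n}) tour_cost c s.

Definition GapPlus n (x : {set 'I_n} -> R) : \bar R :=
  ereal_sup [set ((TSP c / dot c x)%:E) | c in [set c : {set 'I_n} -> R | metric c /\ dot c x != 0]]%classic.

(* bb-move: the new node w is ord_max of 'I_n.+1, old nodes embedded by widen_ord *)
Definition old n (i : 'I_n) : 'I_n.+1 := widen_ord (leqnSn n) i.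

Definition bb n (x : {set 'I_n} -> R) (a b : 'I_n) : {set 'I_n.+1} -> R :=
  fun e =>
    if ord_max \in e then
      (if (e == [set ord_max; old a]) || (e == [set ord_max; old b]) then 1 else 0)
    else if e == [set old a; old b] then 0
    else x [set i : 'I_n | old i \in e].

End Defs.

From mathcomp Require Import all_boot all_order all_algebra all_fingroup.
From mathcomp Require Import all_classical all_reals ereal.
Import Order.TTheory GRing.Theory Num.Theory.
Local Open Scope ring_scope.
Set Implicit Arguments. Unset Strict Implicit. Unset Printing Implicit Defensive.

(* Merge the new node into a. Given a metric cost c on K_n, [merge_cost c a]
   prices an edge uv of K_(n+1) as c(f u, f v), where f = [collapse a] fixes
   the old nodes and sends the new one to a. This cost is again metric; it
   charges c(a, b) on the new edge to b and nothing on the one to a, so its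
   value against bb(x, ab) is c.x. Shortcutting the new node in a tour of
   K_(n+1) yields a tour of K_n that is no more expensive, so TSP does not
   decrease. Hence every ratio in the supremum defining Gap+(x) is dominated
   by one in the supremum defining Gap+(bb(x, ab)). *)

Section Old.
Variable n : nat.

Definition collapse (a : 'I_n) (i : 'I_n.+1) : 'I_n :=
  if unlift ord_max i is Some j then j else a.

Lemma old_lift (i : 'I_n) : old i = lift ord_max i.
Proof. by apply: val_inj => /=; rewrite /bump leqNgt ltn_ord. Qed.

Lemma old_neq_max (i : 'I_n) : old i != ord_max.
Proof. by rewrite -val_eqE /= neq_ltn ltn_ord. Qed.

Lemma old_inj : injective (@old n).
Proof. by move=> i j /(congr1 val) ij; apply: val_inj. Qed.

Lemma old_ord0 : old (ord0 : 'I_n.+1) = ord0.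
Proof. exact: val_inj. Qed.

Lemma collapse_old (a i : 'I_n) : collapse a (old i) = i.
Proof. by rewrite /collapse old_lift liftK. Qed.

Lemma collapse_max (a : 'I_n) : collapse a ord_max = a.
Proof. by rewrite /collapse unlift_none. Qed.

Lemma old_collapse (a : 'I_n) (y : 'I_n.+1) : y != ord_max -> old (collapse a y) = y.
Proof.
by rewrite eq_sym => /unlift_some[j -> _]; rewrite /collapse liftK old_lift.
Qed.

Lemma max_notin_imset_old (A : {set 'I_n}) : ord_max \notin [set old i | i in A].
Proof. by apply/imsetP => -[i _ /eqP]; rewrite eq_sym (negbTE (old_neq_max i)). Qed.

Lemma preimset_imset_old (A : {set 'I_n}) : [set i | old i \in [set old j | j in A]] = A.
Proof. by apply/setP => i; rewrite inE (mem_imset _ _ old_inj). Qed.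

Lemma imset_preimset_old (e : {set 'I_n.+1}) :
  ord_max \notin e -> [set old i | i in [set i | old i \in e]] = e.
Proof.
move=> maxNe; apply/setP => y; apply/imsetP/idP => [[i] | ye].
  by rewrite inE => ? ->.
have maxNy : ord_max != y by apply: contraNneq maxNe => ->.
have [i yE _] := unlift_some maxNy.
by exists i; rewrite ?inE old_lift -yE.
Qed.

Lemma imset_old_set2 (a b : 'I_n) : [set old i | i in [set a; b]] = [set old a; old b].
Proof. by rewrite imsetU1 imset_set1. Qed.

Lemma imset_old_edges (e : {set 'I_n.+1}) :
  (e \in [set [set old i | i in e0] | e0 : {set 'I_n} in edges n]) =
  (e \in edges n.+1) && (ord_max \notin e).
Proof.
apply/imsetP/andP => [[e0 e0E ->] | [eE maxNe]].
  rewrite max_notin_imset_old inE card_imset //; last exact: old_inj.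
  by rewrite inE in e0E.
exists [set i | old i \in e]; last by rewrite imset_preimset_old.
by move: eE; rewrite !finset.in_set -(card_imset _ old_inj) imset_preimset_old.
Qed.

End Old.

Lemma val_ordS N (k : 'I_N.+1) : k != ord_max -> ordS k = k.+1 :> nat.
Proof. by rewrite -val_eqE /= => kN; rewrite modn_small // ltn_neqAle kN ltn_ord. Qed.

Lemma ordS_max N : ordS (@ord_max N) = ord0.
Proof. by apply: val_inj; rewrite /= modnn. Qed.

Lemma ordS_neq N (k : 'I_N.+2) : ordS k != k.
Proof.
have [->|kNmax] := eqVneq k ord_max; first by rewrite ordS_max -(inj_eq (@ord_inj _)).
by rewrite -(inj_eq (@ord_inj _)) (val_ordS kNmax) gtn_eqF.
Qed.

Lemma ordS_old N (k : 'I_N.+1) : k != ord_max -> ordS (old k) = old (ordS k).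
Proof.
by move=> kNmax; apply: ord_inj; rewrite val_ordS ?old_neq_max // -(val_ordS kNmax).
Qed.

Lemma ordS_old_max N : ordS (old (@ord_max N)) = ord_max.
Proof. by apply: ord_inj; rewrite val_ordS ?old_neq_max. Qed.

Section Merge.
Variable R : realType.

Definition edge_cost n (c : {set 'I_n} -> R) (u v : 'I_n) : R :=
  if u == v then 0 else c [set u; v].

Lemma edge_cost_set2 n (c : {set 'I_n} -> R) u v :
  u != v -> edge_cost c u v = c [set u; v].
Proof. by rewrite /edge_cost => /negbTE->. Qed.

Lemma edge_cost_ge0 n (c : {set 'I_n} -> R) u v : metric c -> 0 <= edge_cost c u v.
Proof.
case=> c_ge0 _; rewrite /edge_cost; case: eqVneq => // uv.
by apply: c_ge0; rewrite inE cards2 uv.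
Qed.

Lemma edge_cost_triangle n (c : {set 'I_n} -> R) u v t : metric c ->
  edge_cost c u v <= edge_cost c u t + edge_cost c t v.
Proof.
move=> mc; case: (eqVneq u v) => [->|uv].
  by rewrite {1}/edge_cost eqxx addr_ge0 ?edge_cost_ge0.
case: (eqVneq t u) => [->|tu]; first by rewrite {2}/edge_cost eqxx add0r.
case: (eqVneq t v) => [->|tv]; first by rewrite {3}/edge_cost eqxx addr0.
rewrite !edge_cost_set2 // 1?eq_sym //.
by apply: mc.2; rewrite // eq_sym.
Qed.

(* The edge joining the new node to [a] collapses to a singleton; it gets cost 0. *)
Definition merge_cost n (c : {set 'I_n} -> R) (a : 'I_n) (e : {set 'I_n.+1}) : R :=
  let e' := [set collapse a i | i in e] in if #|e'| == 2 then c e' else 0.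

Lemma merge_cost_set2 n (c : {set 'I_n} -> R) a (i j : 'I_n.+1) :
  merge_cost c a [set i; j] = edge_cost c (collapse a i) (collapse a j).
Proof.
rewrite /merge_cost /edge_cost imsetU1 imset_set1 cards2.
by case: (eqVneq (collapse a i)) => [->|ne]; rewrite ?eqxx // ne.
Qed.

Lemma metric_merge_cost n (c : {set 'I_n} -> R) a :
  metric c -> metric (merge_cost c a).
Proof.
move=> mc; split=> [e _ | i j k _ _ _].
  by rewrite /merge_cost; case: ifP => // e'E; apply: mc.1; rewrite inE.
by rewrite !merge_cost_set2 edge_cost_triangle.
Qed.

Lemma merge_cost_old n (c : {set 'I_n} -> R) a (e : {set 'I_n}) :
  e \in edges n -> merge_cost c a [set old i | i in e] = c e.
Proof.
rewrite /merge_cost /= -imset_comp (eq_imset _ (collapse_old a)) imset_id.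
by rewrite inE => ->.
Qed.

Lemma TSP_le_tour_cost n (c : {set 'I_n} -> R) s : TSP c <= tour_cost c s.
Proof. exact: bigmin_le. Qed.

Lemma le_TSP n (c : {set 'I_n} -> R) y : (forall s, y <= tour_cost c s) -> y <= TSP c.
Proof. by move=> le_y; apply: le_bigmin. Qed.

Definition rot N : {perm 'I_N} := perm (@ordS_inj N).

Lemma rotX_val N (i : 'I_N) q : val ((rot N ^+ q)%g i) = ((i + q) %% N)%N.
Proof.
elim: q => [|q IH]; first by rewrite expg0 perm1 addn0 modn_small.
rewrite expgSr permM permE /= -addn1 -modnDml IH modn_mod modnDml.
by rewrite addn1 addnS.
Qed.

Lemma tour_cost_rot N (c : {set 'I_N} -> R) (s : {perm 'I_N}) :
  tour_cost c (rot N * s)%g = tour_cost c s.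
Proof.
rewrite /tour_cost [in RHS](reindex_inj (@ordS_inj N)).
by apply: eq_bigr => k _; rewrite !permM !permE.
Qed.

Lemma tour_cost_rotX N (c : {set 'I_N} -> R) (s : {perm 'I_N}) q :
  tour_cost c ((rot N ^+ q) * s)%g = tour_cost c s.
Proof.
elim: q => [|q IH]; first by rewrite expg0 mul1g.
by rewrite expgS -mulgA tour_cost_rot.
Qed.

Lemma exists_tour_fixing_max n (c : {set 'I_n.+1} -> R) (s : {perm 'I_n.+1}) :
  exists2 s' : {perm 'I_n.+1}, s' ord_max = ord_max & tour_cost c s' = tour_cost c s.
Proof.
pose p := (s^-1)%g ord_max.
exists ((rot n.+1 ^+ p.+1) * s)%g; last exact: tour_cost_rotX.
rewrite permM; have -> : (rot n.+1 ^+ p.+1)%g ord_max = p.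
  by apply: val_inj; rewrite rotX_val /= addnS -addSn modnDl modn_small.
by rewrite permKV.
Qed.

(* [s'] visits the new node last, between [g ord_max] and [g ord0]; the
   shortcut tour [g] skips it, which is paid for by the triangle inequality. *)
Lemma tour_cost_shortcut N (c : {set 'I_N.+2} -> R) a (s' : {perm 'I_N.+3}) :
  metric c -> s' ord_max = ord_max ->
  exists s : {perm 'I_N.+2}, tour_cost c s <= tour_cost (merge_cost c a) s'.
Proof.
move=> mc s'max.
pose g k := collapse a (s' (old k)).
have s'old k : s' (old k) != ord_max.
  by rewrite -s'max (inj_eq perm_inj) old_neq_max.
have g_inj : injective g.
  by move=> k1 k2 /(congr1 (@old _)); rewrite !old_collapse // => /perm_inj/old_inj.
exists (perm g_inj).
have -> : tour_cost c (perm g_inj) = \sum_k edge_cost c (g k) (g (ordS k)).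
  apply: eq_bigr => k _.
  by rewrite !permE edge_cost_set2 // eq_sym (inj_eq g_inj) ordS_neq.
have -> : tour_cost (merge_cost c a) s' =
    \sum_(k | k != ord_max) edge_cost c (g k) (g (ordS k)) +
    (edge_cost c (g ord_max) a + edge_cost c a (g (ordS ord_max))).
  rewrite /tour_cost big_ord_recr (bigD1 ord_max) //= -addrA addrCA.
  congr (_ + (_ + _)).
  - by apply: eq_bigr => k kNmax; rewrite ordS_old // merge_cost_set2.
  - by rewrite ordS_old_max merge_cost_set2 s'max collapse_max.
  - by rewrite ordS_max merge_cost_set2 s'max collapse_max ordS_max /g old_ord0.
by rewrite (bigD1 ord_max) //= addrC lerD2l edge_cost_triangle.
Qed.

Lemma TSP_le_merge_cost N (c : {set 'I_N.+2} -> R) a :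
  metric c -> TSP c <= TSP (merge_cost c a).
Proof.
move=> mc; apply: le_TSP => s''.
have [s' s'max <-] := exists_tour_fixing_max (merge_cost c a) s''.
have [s le_s] := tour_cost_shortcut a mc s'max.
exact: le_trans (TSP_le_tour_cost c s) le_s.
Qed.

Lemma sum_edges_notin_max n (F : {set 'I_n.+1} -> R) :
  \sum_(e in edges n.+1 | ord_max \notin e) F e =
  \sum_(e in edges n) F [set old i | i in e].
Proof.
rewrite (eq_bigl (mem [set [set old i | i in e0] | e0 : {set 'I_n} in edges n])).
  by rewrite big_imset //= => e1 e2 _ _; exact: (imset_inj (@old_inj n)).
by move=> e; apply/esym/imset_old_edges.
Qed.

Lemma bb_old n (x : {set 'I_n} -> R) a b (e : {set 'I_n}) :
  bb x a b [set old i | i in e] = if e == [set a; b] then 0 else x e.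
Proof.
rewrite /bb (negbTE (max_notin_imset_old e)) preimset_imset_old.
by rewrite -imset_old_set2 (inj_eq (imset_inj (@old_inj _))).
Qed.

Lemma sum_edges_max_merge_cost_bb n (c x : {set 'I_n} -> R) a b : a != b ->
  \sum_(e in edges n.+1 | ord_max \in e) merge_cost c a e * bb x a b e = c [set a; b].
Proof.
move=> ab.
have edge_max i : [set ord_max; old i] \in edges n.+1.
  by rewrite inE cards2 (eq_sym ord_max) old_neq_max.
have ma_neq_mb : [set ord_max; old b] != [set ord_max; old a].
  apply/eqP => mbE; move: (set22 ord_max (old b)); rewrite mbE !inE.
  by rewrite (negbTE (old_neq_max b)) (inj_eq (@old_inj _)) eq_sym (negbTE ab).
rewrite (bigD1 [set ord_max; old a]) ?edge_max ?set21 //=.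
rewrite (bigD1 [set ord_max; old b]) ?edge_max ?set21 ?ma_neq_mb //=.
rewrite big1 => [|e /andP[/andP[/andP[_ maxe] Nma] Nmb]]; last first.
  by rewrite /bb maxe (negbTE Nma) (negbTE Nmb) mulr0.
rewrite /bb !set21 !eqxx orbT /= !mulr1 addr0 !merge_cost_set2.
by rewrite collapse_max !collapse_old /edge_cost eqxx (negbTE ab) add0r.
Qed.

Lemma dot_merge_cost_bb n (c x : {set 'I_n} -> R) a b :
  a != b -> x [set a; b] = 1 -> dot (merge_cost c a) (bb x a b) = dot c x.
Proof.
move=> ab xab.
rewrite /dot (bigID (fun e : {set 'I_n.+1} => ord_max \in e)) /=.
rewrite sum_edges_max_merge_cost_bb // sum_edges_notin_max.
have abE : [set a; b] \in edges n by rewrite inE cards2 ab.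
rewrite [in RHS](bigD1 [set a; b]) //= (bigD1 [set a; b]) //= bb_old eqxx mulr0 add0r.
rewrite xab mulr1; congr (_ + _); apply: eq_bigr => e /andP[eE eNab].
by rewrite merge_cost_old // bb_old (negbTE eNab).
Qed.

End Merge.

Theorem mainTheorem5 (R : realType) (n : nat) (x : {set 'I_n} -> R) (a b : 'I_n) :
  (3 <= n)%N -> is_vertex_SEP x -> a != b -> x [set a; b] = 1 ->
  (GapPlus x <= GapPlus (bb x a b))%E.
Proof.
case: n => [|[|m]] // in x a b *.
move=> _ [[_ _ x_ge0] _] ab xab.
apply: ge_ereal_sup => _ [c [mc dot_neq0] <-].
have dot_merge := dot_merge_cost_bb c ab xab.
have dot_gt0 : 0 < dot c x.
  rewrite lt_def dot_neq0 sumr_ge0 // => e eE.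
  by rewrite mulr_ge0 ?mc.1 //; case/andP: (x_ge0 e eE).
apply: le_trans (ereal_sup_ubound _); last first.
  by exists (merge_cost c a); [split; [exact: metric_merge_cost | rewrite dot_merge] | ].
rewrite lee_fin dot_merge ler_wpM2r ?invr_ge0 ?(ltW dot_gt0) //.
exact: TSP_le_merge_cost.
Qed.
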